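(* Let $Q$ be a quandle, $G$ a group and $\rho:Q\to\mathrm{Core}(G)$ a quandle homomorphism. Then the map $\theta(\rho):Q\times Q\to G$, $\theta(\rho)_{x,y}=\rho(x)\rho(y)^{-1}$, is a quandle cocycle of $Q$ with values in $G$.
   Context: A quandle is a set $Q$ with a binary operation $*$ such that every left translation $L_x:y\mapsto x*y$ is bijective, $x*(y*z)=(x*y)*(x*z)$ and $x*x=x$. $\mathrm{Core}(G)$ is the quandle on $G$ with $x*y=xy^{-1}x$. A quandle cocycle with values in a group $G$ is a map $\theta:Q\times Q\to G$ with $\theta_{x*y,x*z}\theta_{x,z}=\theta_{x,y*z}\theta_{y,z}$ and $\theta_{x,x}=1$ for all $x,y,z\in Q$. *)

Set Implicit Arguments.

Record Group := {
  gcar :> Type;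
  gmul : gcar -> gcar -> gcar;
  gone : gcar;
  ginv : gcar -> gcar;
  gmulA : forall a b c, gmul a (gmul b c) = gmul (gmul a b) c;
  gmul1l : forall a, gmul gone a = a;
  gmul1r : forall a, gmul a gone = a;
  gmulVl : forall a, gmul (ginv a) a = gone;
  gmulVr : forall a, gmul a (ginv a) = gone
}.

Definition bijective {A B : Type} (f : A -> B) :=
  exists g : B -> A, (forall a, g (f a) = a) /\ (forall b, f (g b) = b).

Record Quandle := {
  qcar :> Type;
  qop : qcar -> qcar -> qcar;
  qL_bij : forall x, bijective (qop x);
  qdist : forall x y z, qop x (qop y z) = qop (qop x y) (qop x z);
  qidem : forall x, qop x x = x
}.

Definition core_op (G : Group) (x y : G) : G :=
  gmul G (gmul G x (ginv G y)) x.

Definition is_hom_to_core (Q : Quandle) (G : Group) (rho : Q -> G) :=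
  forall x y, rho (qop Q x y) = core_op G (rho x) (rho y).

Definition quandle_cocycle (Q : Quandle) (G : Group) (theta : Q -> Q -> G) :=
  (forall x y z,
      gmul G (theta (qop Q x y) (qop Q x z)) (theta x z)
      = gmul G (theta x (qop Q y z)) (theta y z))
  /\ (forall x, theta x x = gone G).

Definition theta_of (Q : Quandle) (G : Group) (rho : Q -> G) : Q -> Q -> G :=
  fun x y => gmul G (rho x) (ginv G (rho y)).


(* With [a, b, c] the images of [x, y, z], both sides of the cocycle identity
   reduce to [a b^-1]: on the left [(a b^-1 a)(a c^-1 a)^-1 (a c^-1)] telescopes,
   and on the right [(b c^-1 b)^-1 = b^-1 c b^-1] absorbs the factor [b c^-1]. *)

Section GroupFacts.

Variable G : Group.
Local Notation "a * b" := (gmul G a b).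
Local Notation "a ^-1" := (ginv G a) (at level 3).
Local Notation "1" := (gone G).

Lemma gmulA' a b c : (a * b) * c = a * (b * c).
Proof. symmetry; apply gmulA. Qed.

Lemma gmulKV a b : a^-1 * (a * b) = b.
Proof. rewrite gmulA, gmulVl; apply gmul1l. Qed.

Lemma gmulVK a b : a * (a^-1 * b) = b.
Proof. rewrite gmulA, gmulVr; apply gmul1l. Qed.

Lemma ginv_unique a b : a * b = 1 -> b = a^-1.
Proof. intro Hab; rewrite <- (gmul1r G a^-1), <- Hab; symmetry; apply gmulKV. Qed.

Lemma ginvK a : (a^-1)^-1 = a.
Proof. symmetry; apply ginv_unique, gmulVl. Qed.

Lemma ginvM a b : (a * b)^-1 = b^-1 * a^-1.
Proof. symmetry; apply ginv_unique; rewrite gmulA', gmulVK; apply gmulVr. Qed.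

Lemma ginv_core_op a b : (core_op G a b)^-1 = a^-1 * (b * a^-1).
Proof. unfold core_op; rewrite !ginvM, ginvK; reflexivity. Qed.

Lemma core_op_div_l a b c :
  core_op G a b * (core_op G a c)^-1 * (a * c^-1) = a * b^-1.
Proof.
  rewrite ginv_core_op; unfold core_op; rewrite !gmulA', gmulVK, gmulKV, gmulVr.
  rewrite gmul1r; reflexivity.
Qed.

Lemma core_op_div_r a b c :
  a * (core_op G b c)^-1 * (b * c^-1) = a * b^-1.
Proof. rewrite ginv_core_op, !gmulA', gmulKV, gmulVr, gmul1r; reflexivity. Qed.

End GroupFacts.

Theorem lemma4p2 (Q : Quandle) (G : Group) (rho : Q -> G) :
  is_hom_to_core Q G rho -> quandle_cocycle Q G (theta_of Q G rho).
Proof.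
  intro Hrho; unfold quandle_cocycle, theta_of; split.
  - intros x y z; rewrite !Hrho, core_op_div_l, core_op_div_r; reflexivity.
  - intro x; apply gmulVr.
Qed.
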